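(* Let $F$ be a non-archimedean local field of characteristic not $2$ with valuation ring $\mathfrak{o}$, $V$ a $2$-dimensional $F$-vector space, and $\ddagger$ an orthogonal involution on $End(V)$ with associated bilinear form $b_\ddagger$. For lattices $\Lambda_1,\Lambda_2\subset V$ let $\mathcal{O}_i=End(\Lambda_i)\cap End(\Lambda_i^\sharp)$. Then $\mathcal{O}_1=\mathcal{O}_2$ if and only if $\Lambda_1=\lambda\Lambda_2$ or $\Lambda_1=\lambda\Lambda_2^\sharp$ for some $\lambda\in F^\times$.
   Context: $b_\ddagger$ is a nondegenerate symmetric bilinear form on $V$ (unique up to scaling) with $b_\ddagger(v,\sigma w)=b_\ddagger(\sigma^\ddagger v,w)$ for all $v,w\in V,\sigma\in End(V)$. A lattice is a finitely generated $\mathfrak{o}$-submodule spanning $V$; $\Lambda^\sharp=\{v\in V:b_\ddagger(v,\Lambda)\subset\mathfrak{o}\}$; $End(\Lambda)=\{\sigma:\sigma\Lambda\subset\Lambda\}$. *)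

From mathcomp Require Import all_boot all_order all_algebra.
Set Implicit Arguments. Unset Strict Implicit. Unset Printing Implicit Defensive.
Import Order.TTheory GRing.Theory Num.Theory.
Local Open Scope ring_scope.

(* A discrete valuation v : F -> int (its value at 0 is irrelevant; 0 has
   valuation +oo by convention, handled by the disjunctions "x = 0 \/ ..."). *)
Definition vge (F : fieldType) (v : F -> int) (x : F) (k : int) : Prop :=
  x = 0 \/ k <= v x.

Definition vring (F : fieldType) (v : F -> int) (x : F) : Prop := vge v x 0.

Record is_nonarch_local_field (F : fieldType) (v : F -> int) : Prop := {
  lf_mul : forall x y : F, x != 0 -> y != 0 -> v (x * y) = v x + v y;
  lf_add : forall x y : F, x != 0 -> y != 0 -> vge v (x + y) (Num.min (v x) (v y));
  lf_unif : exists pi : F, pi != 0 /\ v pi = 1;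
  lf_complete : forall u : nat -> F,
      (forall k : int, exists N, forall m n, (N <= m)%N -> (N <= n)%N ->
          vge v (u m - u n) k) ->
      exists l : F, forall k : int, exists N, forall n, (N <= n)%N -> vge v (u n - l) k;
  lf_residue_finite : exists s : seq F, (forall r, r \in s -> vring v r) /\
      forall x, vring v x -> exists2 r, r \in s & vge v (x - r) 1
}.

(* V = F^2 as column vectors, End(V) = 2x2 matrices. *)
Definition bform (F : fieldType) (B : 'M[F]_2) (x y : 'cV[F]_2) : F :=
  (x^T *m B *m y) 0 0.

Definition orth_involution_with_form (F : fieldType)
    (dag : 'M[F]_2 -> 'M[F]_2) (B : 'M[F]_2) : Prop :=
  [/\ (forall a (s t : 'M[F]_2), dag (a *: s + t) = a *: dag s + dag t),
      (forall s t : 'M[F]_2, dag (s *m t) = dag t *m dag s),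
      (forall s : 'M[F]_2, dag (dag s) = s),
      B^T = B /\ B \in unitmx &
      (forall (s : 'M[F]_2) (x y : 'cV[F]_2), bform B x (s *m y) = bform B (dag s *m x) y)].

Definition is_lattice (F : fieldType) (v : F -> int) (L : 'cV[F]_2 -> Prop) : Prop :=
  exists s : seq 'cV[F]_2,
    (forall x, L x <-> exists a : 'I_(size s) -> F,
        (forall i, vring v (a i)) /\ x = \sum_(i < size s) a i *: s`_i) /\
    (forall x : 'cV[F]_2, exists a : 'I_(size s) -> F, x = \sum_(i < size s) a i *: s`_i).

Definition dual_lattice (F : fieldType) (v : F -> int) (B : 'M[F]_2)
    (L : 'cV[F]_2 -> Prop) : 'cV[F]_2 -> Prop :=
  fun x => forall y, L y -> vring v (bform B x y).

Definition End_lat (F : fieldType) (L : 'cV[F]_2 -> Prop) : 'M[F]_2 -> Prop :=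
  fun s => forall x, L x -> L (s *m x).

Definition order_of (F : fieldType) (v : F -> int) (B : 'M[F]_2)
    (L : 'cV[F]_2 -> Prop) : 'M[F]_2 -> Prop :=
  fun s => End_lat L s /\ End_lat (dual_lattice v B L) s.

Definition scale_lat (F : fieldType) (l : F) (L : 'cV[F]_2 -> Prop) : 'cV[F]_2 -> Prop :=
  fun x => exists2 y, L y & x = l *: y.

From mathcomp Require Import all_boot all_order all_algebra fingroup perm.
From mathcomp Require Import ring.
Set Implicit Arguments. Unset Strict Implicit. Unset Printing Implicit Defensive.
Import Order.TTheory GRing.Theory Num.Theory.
Local Open Scope ring_scope.

(* Write L1 = P1 o^2 and L2 = P2 o^2 for invertible matrices P1, P2 (a lattice in F^2 has an
   o-basis); then L^# = (P^T B)^-1 o^2 and End(P o^2) = {s | P^-1 s P is integral}.  By the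
   elementary divisor theorem there is a basis P with L1 = P o^2 and L1^# = P diag(d1, d2) o^2,
   d1 | d2.  In this basis O1 contains both diagonal idempotents and the nilpotent e12, and a
   lattice stable under these three is of the form a P diag(1, t) o^2 with t in o.  Since
   O2 = O1, this applies to L2 = a P diag(1, t) o^2 and L2^# = b P diag(1, u) o^2.  If t | u,
   the element P (t^-1 e12) P^-1 lies in O2 = O1, hence in End(L1), so t is a unit and
   L2 = a L1; symmetrically L2^# = b L1 when u | t. *)

Section TwoByTwo.
Variable R : nzRingType.

Definition mx22 (a b c d : R) : 'M[R]_2 :=
  \matrix_(i, j) if i == 0 :> nat then (if j == 0 :> nat then a else b)
                 else (if j == 0 :> nat then c else d).
Definition cv2 (x y : R) : 'cV[R]_2 := \col_i (if i == 0 :> nat then x else y).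

Lemma mx22_eta (M : 'M[R]_2) : M = mx22 (M 0 0) (M 0 1) (M 1 0) (M 1 1).
Proof.
apply/matrixP => i j; rewrite mxE.
by case: i => [[|[|//]]] ?; case: j => [[|[|//]]] ? /=; congr (M _ _); apply: val_inj.
Qed.

Lemma cv2_eta (x : 'cV[R]_2) : x = cv2 (x 0 0) (x 1 0).
Proof.
apply/matrixP => i j; rewrite mxE (ord1 j).
by case: i => [[|[|//]]] ? /=; congr (x _ _); apply: val_inj.
Qed.

Lemma cv2_ext (x y : 'cV[R]_2) : x 0 0 = y 0 0 -> x 1 0 = y 1 0 -> x = y.
Proof. by move=> e0 e1; rewrite [x]cv2_eta [y]cv2_eta e0 e1. Qed.

Lemma mulmx22 a b c d a' b' c' d' :
  mx22 a b c d *m mx22 a' b' c' d' =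
  mx22 (a * a' + b * c') (a * b' + b * d') (c * a' + d * c') (c * b' + d * d').
Proof.
apply/matrixP => i j; rewrite !mxE !big_ord_recl big_ord0 !mxE /=.
by case: i => [[|[|//]]] ?; case: j => [[|[|//]]] ? /=; rewrite addr0.
Qed.

Lemma mulmx22_cv2 a b c d x y :
  mx22 a b c d *m cv2 x y = cv2 (a * x + b * y) (c * x + d * y).
Proof.
apply/matrixP => i j; rewrite !mxE !big_ord_recl big_ord0 !mxE /=.
by case: i => [[|[|//]]] ? /=; rewrite addr0.
Qed.

Lemma scalemx22 k a b c d : k *: mx22 a b c d = mx22 (k * a) (k * b) (k * c) (k * d).
Proof. by apply/matrixP => i j; rewrite !mxE; case: (i == 0 :> nat); case: (j == 0 :> nat). Qed.

Lemma scalecv2 k x y : k *: cv2 x y = cv2 (k * x) (k * y).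
Proof. by apply/matrixP => i j; rewrite !mxE; case: (i == 0 :> nat). Qed.

Lemma addcv2 x y x' y' : cv2 x y + cv2 x' y' = cv2 (x + x') (y + y').
Proof. by apply/matrixP => i j; rewrite !mxE; case: (i == 0 :> nat). Qed.

Lemma mx22_1 : 1%:M = mx22 1 0 0 1.
Proof.
apply/matrixP => i j; rewrite !mxE.
by case: i => [[|[|//]]] ?; case: j => [[|[|//]]] ?.
Qed.

End TwoByTwo.

Lemma det_mx22 (R : comNzRingType) (a b c d : R) : \det (mx22 a b c d) = a * d - b * c.
Proof.
rewrite (expand_det_row _ 0) !big_ord_recl big_ord0 /cofactor !det_mx11 !mxE /=.
by rewrite addr0 expr0 expr1 mul1r mulN1r mulrN.
Qed.

Lemma unitmx22 (F : fieldType) (a b c d : F) :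
  (mx22 a b c d \in unitmx) = (a * d != b * c).
Proof. by rewrite unitmxE unitfE det_mx22 subr_eq0. Qed.

Section Valuation.
Variables (F : fieldType) (v : F -> int).
Hypothesis vM : forall x y : F, x != 0 -> y != 0 -> v (x * y) = v x + v y.
Hypothesis vD : forall x y : F, x != 0 -> y != 0 -> vge v (x + y) (Num.min (v x) (v y)).
Local Notation o := (vring v).

Lemma valuation1 : v 1 = 0.
Proof.
have := vM (oner_neq0 F) (oner_neq0 F); rewrite mulr1 => /eqP.
by rewrite eq_sym -subr_eq0 addrK => /eqP.
Qed.

Lemma valuationN1 : v (-1) = 0.
Proof.
have N1_neq0 : (-1 : F) != 0 by rewrite oppr_eq0 oner_neq0.
have := vM N1_neq0 N1_neq0; rewrite mulrNN mulr1 valuation1 => /esym/eqP.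
by rewrite -mulr2n mulrn_eq0 => /eqP.
Qed.

Lemma valuationV x : x != 0 -> v x^-1 = - v x.
Proof.
move=> x0; have := vM x0 (invr_neq0 x0); rewrite mulfV // valuation1 => /esym/eqP.
by rewrite addrC addr_eq0 => /eqP.
Qed.
Lemma vring0 : o 0. Proof. by left. Qed.
Lemma vring1 : o 1. Proof. by right; rewrite valuation1. Qed.

Lemma vringD x y : o x -> o y -> o (x + y).
Proof.
case=> [->|vx]; first by rewrite add0r.
case=> [->|vy]; first by rewrite addr0; right.
have [->|x0] := eqVneq x 0; first by rewrite add0r; right.
have [->|y0] := eqVneq y 0; first by rewrite addr0; right.
case: (vD x0 y0) => [->|vxy]; first exact: vring0.
by right; apply: le_trans vxy; rewrite le_min vx vy.
Qed.

Lemma vringM x y : o x -> o y -> o (x * y).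
Proof.
have [->|x0] := eqVneq x 0; first by rewrite mul0r => _ _; apply: vring0.
have [->|y0] := eqVneq y 0; first by rewrite mulr0 => _ _; apply: vring0.
case=> [/eqP|vx]; first by rewrite (negbTE x0).
case=> [/eqP|vy]; first by rewrite (negbTE y0).
by right; rewrite vM // addr_ge0.
Qed.

Lemma vringN x : o x -> o (- x).
Proof. by move=> ox; rewrite -mulN1r; apply: vringM ox; right; rewrite valuationN1. Qed.

Lemma vringB x y : o x -> o y -> o (x - y).
Proof. by move=> ox oy; apply/vringD/vringN. Qed.

Lemma vring_sum (I : Type) (r : seq I) (P : pred I) (f : I -> F) :
  (forall i, P i -> o (f i)) -> o (\sum_(i <- r | P i) f i).
Proof. by move=> f_int; apply: (big_ind o) => //; [apply: vring0 | apply: vringD]. Qed.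

Lemma vring_divC x y : x != 0 -> y != 0 -> o (y / x) \/ o (x / y).
Proof.
move=> x0 y0; have [vxy|vyx] := lerP (v x) (v y); [left | right]; right.
  by rewrite vM ?invr_eq0 // valuationV // subr_ge0.
by rewrite vM ?invr_eq0 // valuationV // subr_ge0 ltW.
Qed.

Lemma vring_div_trans x y z : y != 0 -> o (z / y) -> o (y / x) -> o (z / x).
Proof. by move=> y0 ozy oyx; rewrite -(divfK y0 z) -mulrA; apply: vringM. Qed.

Lemma exists_vring_divisor (s : seq F) : has (fun x => x != 0) s ->
  exists2 z, z \in s & z != 0 /\ forall y, y \in s -> o (y / z).
Proof.
elim: s => [//|x s IHs] /=.
have dvd_self z : z != 0 -> o (z / z) by move=> z0; rewrite mulfV //; apply: vring1.
have [-> /= /IHs [z zs [z0 zdvd]]|x_neq0 _] := eqVneq x 0.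
  exists z; first by rewrite inE zs orbT.
  split=> // y; rewrite inE => /orP [/eqP ->|]; last exact: zdvd.
  by rewrite mul0r; apply: vring0.
have [/IHs [z zs [z0 zdvd]]|/hasPn s0] := boolP (has (fun x => x != 0) s).
  have [ozx|oxz] := vring_divC x_neq0 z0.
    exists x; first exact: mem_head.
    split=> // y; rewrite inE => /orP [/eqP ->|ys]; first exact: dvd_self.
    exact: vring_div_trans (zdvd y ys) ozx.
  exists z; first by rewrite inE zs orbT.
  by split=> // y; rewrite inE => /orP [/eqP ->|]; last exact: zdvd.
exists x; first exact: mem_head.
split=> // y; rewrite inE => /orP [/eqP ->|ys]; first exact: dvd_self.
by move/negPn/eqP: (s0 y ys) ->; rewrite mul0r; apply: vring0.
Qed.

Definition intmx m n (A : 'M[F]_(m, n)) := forall i j, o (A i j).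

Lemma intmx22 a b c d : intmx (mx22 a b c d) <-> [/\ o a, o b, o c & o d].
Proof.
split=> [int_abcd | [oa ob oc od] i j].
  move: (int_abcd 0 0) (int_abcd 0 1) (int_abcd 1 0) (int_abcd 1 1).
  by rewrite !mxE.
by rewrite mxE; case: (i == 0 :> nat); case: (j == 0 :> nat).
Qed.

Lemma intcv2 x y : intmx (cv2 x y) <-> o x /\ o y.
Proof.
split=> [int_xy | [ox oy] i j]; first by have := int_xy 0 0; have := int_xy 1 0; rewrite !mxE.
by rewrite mxE; case: (i == 0 :> nat).
Qed.

Lemma intmx0 m n : intmx (0 : 'M[F]_(m, n)).
Proof. by move=> i j; rewrite mxE; apply: vring0. Qed.

Lemma intmx_delta m n i0 j0 : intmx (delta_mx i0 j0 : 'M[F]_(m, n)).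
Proof. by move=> i j; rewrite mxE; case: (_ && _); [apply: vring1 | apply: vring0]. Qed.

Lemma intmxM m n p (A : 'M[F]_(m, n)) (C : 'M[F]_(n, p)) :
  intmx A -> intmx C -> intmx (A *m C).
Proof. by move=> intA intC i j; rewrite mxE; apply: vring_sum => k _; apply: vringM. Qed.

Lemma intmxD m n (A C : 'M[F]_(m, n)) : intmx A -> intmx C -> intmx (A + C).
Proof. by move=> intA intC i j; rewrite mxE; apply: vringD. Qed.

Lemma intmxZ m n c (A : 'M[F]_(m, n)) : o c -> intmx A -> intmx (c *: A).
Proof. by move=> oc intA i j; rewrite mxE; apply: vringM. Qed.

Lemma intmx_tr m n (A : 'M[F]_(m, n)) : intmx A -> intmx A^T.
Proof. by move=> intA i j; rewrite mxE. Qed.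

Definition lat n (P : 'M[F]_n) : 'cV[F]_n -> Prop :=
  fun x => exists2 a, intmx a & x = P *m a.

Lemma invmx_eq n (A C : 'M[F]_n) : A *m C = 1%:M -> invmx A = C.
Proof.
move=> AC1; have [Au _] := mulmx1_unit AC1.
by rewrite -[RHS]mul1mx -(mulVmx Au) -mulmxA AC1 mulmx1.
Qed.

Lemma invmxM n (A C : 'M[F]_n) : A \in unitmx -> C \in unitmx ->
  invmx (A *m C) = invmx C *m invmx A.
Proof.
by move=> Au Cu; apply: invmx_eq; rewrite -mulmxA (mulmxA C) mulmxV // mul1mx mulmxV.
Qed.

Lemma lat_unitE n (P : 'M[F]_n) x : P \in unitmx -> lat P x <-> intmx (invmx P *m x).
Proof.
move=> Pu; split=> [[a int_a ->]|int_x]; first by rewrite mulKmx.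
by exists (invmx P *m x); rewrite ?mulKVmx.
Qed.

Lemma lat_mulmx_int n (P W : 'M[F]_n) x : intmx W -> lat (P *m W) x -> lat P x.
Proof. by move=> intW [a int_a ->]; exists (W *m a); [apply: intmxM | rewrite mulmxA]. Qed.

Lemma lat_comb n (P : 'M[F]_n) x y a b :
  lat P x -> lat P y -> o a -> o b -> lat P (a *: x + b *: y).
Proof.
move=> [p int_p ->] [q int_q ->] oa ob; exists (a *: p + b *: q).
  by apply: intmxD; apply: intmxZ.
by rewrite mulmxDr !scalemxAr.
Qed.

Lemma lat_sum n (P : 'M[F]_n) (I : Type) (r : seq I) (a : I -> F) (y : I -> 'cV[F]_n) :
  (forall i, o (a i)) -> (forall i, lat P (y i)) -> lat P (\sum_(i <- r) a i *: y i).
Proof.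
move=> oa laty; apply: (big_ind (lat P)).
- by exists 0; rewrite ?mulmx0 //; apply: intmx0.
- by move=> x z latx latz; rewrite -[x]scale1r -[z]scale1r; apply: lat_comb => //; apply: vring1.
- by move=> i _; rewrite -[_ *: _]addr0 -(scale0r (y i)); apply: lat_comb => //; apply: vring0.
Qed.

Lemma lat_mull n (Q P P' : 'M[F]_n) : (forall x, lat P x <-> lat P' x) ->
  forall x, lat (Q *m P) x <-> lat (Q *m P') x.
Proof.
move=> eqP' x; split=> [[a int_a ->]|[a int_a ->]].
  by case: (eqP' (P *m a)).1; [exists a | move=> b int_b e; exists b; rewrite // -mulmxA e mulmxA].
by case: (eqP' (P' *m a)).2; [exists a | move=> b int_b e; exists b; rewrite // -mulmxA e mulmxA].
Qed.

Definition GLo n (U : 'M[F]_n) := [/\ U \in unitmx, intmx U & intmx (invmx U)].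

Lemma GLoM n (U W : 'M[F]_n) : GLo U -> GLo W -> GLo (U *m W).
Proof.
case=> Uu intU intU' [Wu intW intW']; split; first by rewrite unitmx_mul Uu Wu.
  exact: intmxM.
by rewrite invmxM //; apply: intmxM.
Qed.

Lemma GLo_inverse n (U U' : 'M[F]_n) : U *m U' = 1%:M -> intmx U -> intmx U' -> GLo U.
Proof. by move=> UU' intU intU'; split; [case: (mulmx1_unit UU') | | rewrite (invmx_eq UU')]. Qed.

Lemma lat_GLo n (P U : 'M[F]_n) x : P \in unitmx -> GLo U -> lat (P *m U) x <-> lat P x.
Proof.
move=> Pu [Uu intU intU'].
have PUu : P *m U \in unitmx by rewrite unitmx_mul Pu Uu.
rewrite (lat_unitE _ PUu) (lat_unitE _ Pu) invmxM // -mulmxA.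
split=> [int_x|]; last exact: intmxM.
by rewrite -(mulKVmx Uu (invmx P *m x)); apply: intmxM.
Qed.

Definition End_mx n (P s : 'M[F]_n) := intmx (invmx P *m s *m P).

Lemma End_mx_conj n (P Y s : 'M[F]_n) : P \in unitmx -> Y \in unitmx ->
  End_mx (P *m Y) (P *m s *m invmx P) <-> End_mx Y s.
Proof.
move=> Pu Yu; rewrite /End_mx invmxM // !mulmxA.
by rewrite -(mulmxA _ (invmx P) P) mulVmx // mulmx1 mulmxKV.
Qed.

Lemma End_mx1 n (s : 'M[F]_n) : End_mx 1%:M s <-> intmx s.
Proof. by rewrite /End_mx invmx1 mul1mx mulmx1. Qed.

Lemma End_mxZ n a (P s : 'M[F]_n) : a != 0 -> P \in unitmx -> End_mx (a *: P) s <-> End_mx P s.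
Proof.
move=> a0 Pu; rewrite /End_mx invmxZ ?unitmxZ ?unitfE //.
by rewrite -!scalemxAl -scalemxAr scalerA mulVf // scale1r.
Qed.

Lemma End_lat_mx (P s : 'M[F]_2) : P \in unitmx -> End_lat (lat P) s <-> End_mx P s.
Proof.
move=> Pu; split=> [stable i j|End_s x [a int_a ->]]; last first.
  by exists (invmx P *m s *m P *m a); [apply: intmxM | rewrite !mulmxA mulmxV ?mul1mx].
have /(lat_unitE _ Pu)/(_ i 0) : lat P (s *m (P *m delta_mx j 0)).
  by apply: stable; exists (delta_mx j 0); [apply: intmx_delta|].
by rewrite !mulmxA -colE mxE.
Qed.

Lemma End_lat_ext (L L' : 'cV[F]_2 -> Prop) : (forall x, L x <-> L' x) ->
  forall s, End_lat L s <-> End_lat L' s.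
Proof. by move=> eqL s; split=> stable x /eqL /stable /eqL. Qed.

Lemma End_mx_lat_eq (P P' s : 'M[F]_2) : P \in unitmx -> P' \in unitmx ->
  (forall x, lat P x <-> lat P' x) -> End_mx P s <-> End_mx P' s.
Proof. by move=> Pu P'u eqP'; rewrite -End_lat_mx // -End_lat_mx // (End_lat_ext eqP'). Qed.

Lemma scale_lat_ext l (L L' : 'cV[F]_2 -> Prop) : (forall x, L x <-> L' x) ->
  forall x, scale_lat l L x <-> scale_lat l L' x.
Proof. by move=> eqL x; split=> -[y /eqL Ly ->]; exists y. Qed.

Lemma scale_latV l (L L' : 'cV[F]_2 -> Prop) : l != 0 ->
  (forall x, L x <-> scale_lat l L' x) -> forall x, L' x <-> scale_lat l^-1 L x.
Proof.
move=> l0 eqL x; split=> [L'x|[y /eqL [z L'z ->] ->]]; last by rewrite scalerA mulVf ?scale1r.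
by exists (l *: x); [apply/eqL; exists x | rewrite scalerA mulVf ?scale1r].
Qed.

Lemma scale_lat_mx l (P : 'M[F]_2) x : scale_lat l (lat P) x <-> lat (l *: P) x.
Proof.
split=> [[y [a int_a ->] ->]|[a int_a ->]]; first by exists a; rewrite // scalemxAl.
by exists (P *m a); [exists a | rewrite scalemxAl].
Qed.

Lemma End_lat_scale l (L : 'cV[F]_2 -> Prop) s : l != 0 ->
  End_lat (scale_lat l L) s <-> End_lat L s.
Proof.
move=> l0; split=> [stable x Lx|stable x [y Ly ->]]; last first.
  by exists (s *m y); [apply: stable | rewrite scalemxAr].
case: (stable (l *: x)); first by exists x.
by move=> y Ly; rewrite -scalemxAr => /(scalerI l0) ->.
Qed.

Section LatticeBasis.
Variables (s : seq 'cV[F]_2) (L : 'cV[F]_2 -> Prop).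
Hypothesis L_span : forall x, L x <-> exists a : 'I_(size s) -> F,
  (forall i, o (a i)) /\ x = \sum_(i < size s) a i *: s`_i.
Hypothesis s_spans : forall x : 'cV[F]_2,
  exists a : 'I_(size s) -> F, x = \sum_(i < size s) a i *: s`_i.

Lemma lattice_comb x y a b : L x -> L y -> o a -> o b -> L (a *: x + b *: y).
Proof.
move=> /L_span [p [op ->]] /L_span [q [oq ->]] oa ob; apply/L_span.
exists (fun i => a * p i + b * q i); split=> [i|]; first by apply: vringD; apply: vringM.
rewrite !scaler_sumr -big_split; apply: eq_bigr => i _.
by rewrite scalerDl !scalerA.
Qed.

Lemma lattice_mem y : y \in s -> L y.
Proof.
move=> ys; apply/L_span; have y_lt : (index y s < size s)%N by rewrite index_mem.
pose i0 := Ordinal y_lt.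
exists (fun i => (i == i0)%:R); split=> [i|].
  by case: (i == i0); [apply: vring1 | apply: vring0].
rewrite (bigD1 i0) //= eqxx scale1r big1 ?addr0 ?nth_index // => i /negbTE ->.
by rewrite scale0r.
Qed.

Lemma span_form_eq0 a b :
  (forall y, y \in s -> a * y 0 0 + b * y 1 0 = 0) -> a = 0 /\ b = 0.
Proof.
move=> form_s0.
have form0 (x : 'cV[F]_2) : a * x 0 0 + b * x 1 0 = 0.
  have [c ->] := s_spans x; rewrite !summxE.
  under eq_bigr do rewrite mxE.
  under [in X in _ + X = _]eq_bigr do rewrite mxE.
  rewrite !mulr_sumr -big_split big1 // => i _.
  by rewrite /= mulrCA [b * _]mulrCA -mulrDr form_s0 ?mulr0 ?mem_nth.
by have := form0 (cv2 1 0); have := form0 (cv2 0 1); rewrite !mxE /= !mulr1 !mulr0 addr0 add0r.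
Qed.

Lemma exists_triangular_basis : exists p q r,
  [/\ p * r != 0, forall y, y \in s -> lat (mx22 p q 0 r) y, L (cv2 p 0) & L (cv2 q r)].
Proof.
(* g has a second coordinate of least valuation; once second coordinates are cleared with g,
   h has a first coordinate of least valuation. *)
have has_g : has (fun x => x != 0) [seq y 1 0 | y : 'cV[F]_2 <- s].
  apply/negPn/negP => /hasPn g0.
  suff: (0 : F) = 0 /\ (1 : F) = 0 by case=> _ /eqP; rewrite oner_eq0.
  apply: span_form_eq0 => y ys.
  by have /negPn/eqP -> := g0 _ (map_f (fun y : 'cV[F]_2 => y 1 0) ys); rewrite mul0r mulr0 addr0.
have [_ /mapP [g gs ->] [g0 g_dvd]] := exists_vring_divisor has_g.
pose c (y : 'cV[F]_2) := y 1 0 / g 1 0.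
have oc y : y \in s -> o (c y) by move=> ys; apply/g_dvd/map_f.
pose f (y : 'cV[F]_2) := y 0 0 - c y * g 0 0.
have has_h : has (fun x => x != 0) (map f s).
  apply/negPn/negP => /hasPn h0.
  suff: (1 : F) = 0 /\ - (g 0 0 / g 1 0) = 0 by case=> /eqP; rewrite oner_eq0.
  apply: span_form_eq0 => y ys.
  have /negPn/eqP <- := h0 _ (map_f f ys).
  by rewrite /f /c; field.
have [_ /mapP [h hs ->] [h0 h_dvd]] := exists_vring_divisor has_h.
exists (f h), (g 0 0), (g 1 0); split; first exact: mulf_neq0.
- move=> y ys; exists (cv2 (f y / f h) (c y)).
    by apply/intcv2; split; [apply/h_dvd/map_f | apply: oc].
  rewrite mulmx22_cv2 mul0r add0r [f h * _]mulrC divfK // [g 0 0 * _]mulrC subrK.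
  by rewrite [g 1 0 * _]mulrC divfK // -cv2_eta.
- have -> : cv2 (f h) 0 = 1 *: h + (- c h) *: g.
    by apply: cv2_ext; rewrite !mxE /= /f /c; field.
  apply: lattice_comb; [exact: lattice_mem hs | exact: lattice_mem gs | exact: vring1 |].
  exact/vringN/oc.
- by rewrite -cv2_eta; apply: lattice_mem.
Qed.

End LatticeBasis.

Lemma lattice_basis L : is_lattice v L -> exists2 P, P \in unitmx & forall x, L x <-> lat P x.
Proof.
case=> s [L_span s_spans].
have [p [q [r [pr0 s_lat Lp Lqr]]]] := exists_triangular_basis L_span s_spans.
exists (mx22 p q 0 r) => [|x]; first by rewrite unitmx22 mulr0.
split=> [/L_span [a [oa ->]]|[a int_a ->]].
  by apply: lat_sum => // i; apply/s_lat/mem_nth.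
have -> : mx22 p q 0 r *m a = a 0 0 *: cv2 p 0 + a 1 0 *: cv2 q r.
  by rewrite {1}[a]cv2_eta mulmx22_cv2 !scalecv2 addcv2; congr cv2; ring.
exact: lattice_comb.
Qed.

Lemma GLoV n (U : 'M[F]_n) : GLo U -> GLo (invmx U).
Proof. by case=> Uu intU intU'; split; rewrite ?unitmx_inv ?invmxK. Qed.

Lemma GLo_perm_mx n (s : {perm 'I_n}) : GLo (perm_mx s).
Proof.
have int_perm (t : {perm 'I_n}) : intmx (perm_mx t).
  by move=> i j; rewrite !mxE; case: (_ == _); [apply: vring1 | apply: vring0].
by apply: (@GLo_inverse _ _ (perm_mx s^-1)); rewrite // -perm_mxM mulgV perm_mx1.
Qed.

Lemma GLo_mx22_upper x : o x -> GLo (mx22 1 x 0 1).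
Proof.
move=> ox; apply: (@GLo_inverse _ _ (mx22 1 (- x) 0 1)).
- by rewrite mulmx22 mx22_1; congr mx22; ring.
- by apply/intmx22; split; [apply: vring1 | | apply: vring0 | apply: vring1].
- by apply/intmx22; split; [apply: vring1 | apply: vringN | apply: vring0 | apply: vring1].
Qed.

Lemma GLo_mx22_lower x : o x -> GLo (mx22 1 0 x 1).
Proof.
move=> ox; apply: (@GLo_inverse _ _ (mx22 1 0 (- x) 1)).
- by rewrite mulmx22 mx22_1; congr mx22; ring.
- by apply/intmx22; split; [apply: vring1 | apply: vring0 | | apply: vring1].
- by apply/intmx22; split; [apply: vring1 | apply: vring0 | apply: vringN | apply: vring1].
Qed.

Definition has_smith_form (M : 'M[F]_2) := exists U d1 d2 W,
  [/\ GLo U, GLo W, d1 * d2 != 0, o (d2 / d1) & M = U *m mx22 d1 0 0 d2 *m W].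

Lemma smith_formM G M H : GLo G -> GLo H -> has_smith_form M -> has_smith_form (G *m M *m H).
Proof.
move=> GLoG GLoH [U [d1 [d2 [W [GLoU GLoW d12 od ->]]]]].
exists (G *m U), d1, d2, (W *m H); split=> //; try exact: GLoM.
by rewrite !mulmxA.
Qed.

Lemma smith_form_pivot a b c d : a != 0 -> o (b / a) -> o (c / a) -> o (d / a) ->
  a * d != b * c -> has_smith_form (mx22 a b c d).
Proof.
move=> a0 oba oca oda det_neq0; pose e := d - c * b / a.
exists (mx22 1 0 (c / a) 1), a, e, (mx22 1 (b / a) 0 1); split.
- exact: GLo_mx22_lower.
- exact: GLo_mx22_upper.
- suff -> : a * e = a * d - b * c by rewrite subr_eq0.
  by rewrite /e; field.
- have -> : e / a = d / a - (c / a) * (b / a) by rewrite /e; field.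
  exact/vringB/vringM.
- by rewrite !mulmx22 /e; congr mx22; field.
Qed.

Lemma smith_form_exists M : M \in unitmx -> has_smith_form M.
Proof.
move=> Mu; have has_entry : has (fun x => x != 0) [seq M p.1 p.2 | p : 'I_2 * 'I_2].
  apply/negPn/negP => /hasPn M0.
  have entry0 i j : M i j = 0.
    by apply/eqP/negPn/M0; apply: (image_f (fun p => M p.1 p.2) (x := (i, j))).
  by move: Mu; rewrite [M]mx22_eta unitmx22 !entry0 !mulr0 eqxx.
have [_ /imageP [[i j] _ ->] [z0 z_min]] := exists_vring_divisor has_entry.
pose M' := col_perm (tperm 0 j) (row_perm (tperm 0 i) M).
have M'E k l : M' k l = M (tperm 0 i k) (tperm 0 j l) by rewrite !mxE.
have -> : M = invmx (perm_mx (tperm 0 i)) *m M' *m invmx (perm_mx (tperm 0 j)^-1).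
  by rewrite /M' row_permE col_permE !mulmxA mulVmx ?unitmx_perm // mul1mx mulmxK ?unitmx_perm.
apply: smith_formM; try exact/GLoV/GLo_perm_mx.
have M'u : M' \in unitmx by rewrite /M' row_permE col_permE !unitmx_mul !unitmx_perm Mu.
have oM' k l : o (M' k l / M' 0 0).
  by rewrite !M'E !tpermL; apply: z_min; apply: (image_f (fun p => M p.1 p.2) (x := (_, _))).
rewrite [M']mx22_eta; apply: smith_form_pivot => //; first by rewrite M'E !tpermL.
by rewrite -unitmx22 -mx22_eta.
Qed.

Lemma End_mx_diag a d p q r w : a != 0 -> d != 0 ->
  End_mx (mx22 a 0 0 d) (mx22 p q r w) <-> [/\ o p, o (q * d / a), o (r * a / d) & o w].
Proof.
move=> a0 d0; rewrite /End_mx (@invmx_eq _ _ (mx22 a^-1 0 0 d^-1)); last first.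
  by rewrite mulmx22 mx22_1; congr mx22; field.
rewrite -intmx22; suff -> : mx22 a^-1 0 0 d^-1 *m mx22 p q r w *m mx22 a 0 0 d =
    mx22 p (q * d / a) (r * a / d) w by [].
by rewrite !mulmx22; congr mx22; field.
Qed.

Lemma lat_diag_of_projections (K : 'M[F]_2) : K \in unitmx ->
  End_lat (lat K) (mx22 1 0 0 0) -> End_lat (lat K) (mx22 0 0 0 1) ->
  exists a b, [/\ a != 0, b != 0 & forall x, lat K x <-> lat (mx22 a 0 0 b) x].
Proof.
move=> Ku E1 E2.
have proj x y : lat K (cv2 x y) -> lat K (cv2 x 0) /\ lat K (cv2 0 y).
  move=> Kxy; have := E1 _ Kxy; have := E2 _ Kxy.
  by rewrite !mulmx22_cv2 !mul0r !mul1r !addr0 !add0r.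
have col j : lat K (cv2 (K 0 j) (K 1 j)).
  exists (delta_mx j 0); first exact: intmx_delta.
  by rewrite -colE; apply: cv2_ext; rewrite !mxE.
have [K00 K10] := proj _ _ (col 0); have [K01 K11] := proj _ _ (col 1).
have row0 : has (fun x => x != 0) [:: K 0 0; K 0 1].
  rewrite /= orbF -negb_and; apply: contraL Ku => /andP [/eqP z00 /eqP z01].
  by rewrite [K]mx22_eta unitmx22 z00 z01 !mul0r eqxx.
have row1 : has (fun x => x != 0) [:: K 1 0; K 1 1].
  rewrite /= orbF -negb_and; apply: contraL Ku => /andP [/eqP z10 /eqP z11].
  by rewrite [K]mx22_eta unitmx22 z10 z11 !mulr0 eqxx.
have [a a_row [a0 a_dvd]] := exists_vring_divisor row0.
have [b b_row [b0 b_dvd]] := exists_vring_divisor row1.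
exists a, b; split=> // x; split.
  have -> : K = mx22 a 0 0 b *m mx22 (K 0 0 / a) (K 0 1 / a) (K 1 0 / b) (K 1 1 / b).
    by rewrite {1}[K]mx22_eta mulmx22 !mul0r !addr0 !add0r ![a * _]mulrC ![b * _]mulrC !divfK.
  apply: lat_mulmx_int; apply/intmx22.
  by split; [apply: a_dvd | apply: a_dvd | apply: b_dvd | apply: b_dvd]; rewrite !inE eqxx ?orbT.
have Ka : lat K (cv2 a 0) by move: a_row; rewrite !inE => /orP [] /eqP ->.
have Kb : lat K (cv2 0 b) by move: b_row; rewrite !inE => /orP [] /eqP ->.
case=> c int_c ->; rewrite {1}[c]cv2_eta mulmx22_cv2.
have -> : cv2 (a * c 0 0 + 0 * c 1 0) (0 * c 0 0 + b * c 1 0) =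
    c 0 0 *: cv2 a 0 + c 1 0 *: cv2 0 b.
  by rewrite !scalecv2 addcv2; congr cv2; ring.
exact: lat_comb.
Qed.

Lemma lat_pair_adapted_basis (P1 Q1 : 'M[F]_2) : P1 \in unitmx -> Q1 \in unitmx ->
  exists P d1 d2, [/\ P \in unitmx, d1 * d2 != 0, o (d2 / d1),
    forall x, lat P1 x <-> lat P x & forall x, lat Q1 x <-> lat (P *m mx22 d1 0 0 d2) x].
Proof.
move=> P1u Q1u; have Mu : invmx P1 *m Q1 \in unitmx by rewrite unitmx_mul unitmx_inv P1u.
have [U [d1 [d2 [W [GLoU GLoW d12 od eqM]]]]] := smith_form_exists Mu.
have Pu : P1 *m U \in unitmx by rewrite unitmx_mul P1u; case: GLoU.
have PDu : P1 *m U *m mx22 d1 0 0 d2 \in unitmx by rewrite unitmx_mul Pu unitmx22 !mulr0.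
exists (P1 *m U), d1, d2; split=> // x; first by rewrite lat_GLo.
by rewrite -(lat_GLo _ PDu GLoW) -(mulKVmx P1u Q1) eqM !mulmxA.
Qed.

Lemma lat_stable_under_pair_order (P R : 'M[F]_2) d1 d2 :
  P \in unitmx -> R \in unitmx -> d1 * d2 != 0 -> o (d2 / d1) ->
  (forall s, End_mx P s -> End_mx (P *m mx22 d1 0 0 d2) s -> End_mx R s) ->
  exists a t, [/\ a != 0, t != 0, o t & forall x, lat R x <-> lat (a *: P *m mx22 1 0 0 t) x].
Proof.
move=> Pu Ru /[dup] d12; rewrite mulf_eq0 negb_or => /andP [d10 d20] od R_stable.
have Du : mx22 d1 0 0 d2 \in unitmx by rewrite unitmx22 !mulr0.
pose K := invmx P *m R; have Ku : K \in unitmx by rewrite unitmx_mul unitmx_inv Pu.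
have eqR : R = P *m K by rewrite mulKVmx.
have K_stable s : intmx s -> End_mx (mx22 d1 0 0 d2) s -> End_lat (lat K) s.
  move=> int_s End_s; apply/End_lat_mx; rewrite // -(End_mx_conj _ Pu Ku) -eqR.
  apply: R_stable; last by rewrite End_mx_conj.
  by rewrite -{1}[P]mulmx1 End_mx_conj ?unitmx1 // End_mx1.
(* the matrix units e11, e22 and e12, with 0/1 entries written as bool casts *)
have stable_e (p q w : bool) :
    o (q%:R * d2 / d1) -> End_lat (lat K) (mx22 p%:R q%:R 0 w%:R).
  have ob (c : bool) : o c%:R by case: c; [apply: vring1 | apply: vring0].
  move=> oq; apply: K_stable; first by apply/intmx22; split; rewrite ?ob //; apply: vring0.
  apply/End_mx_diag => //; split; rewrite ?ob //.
  by rewrite !mul0r; apply: vring0.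
have [a [b [a0 b0 eqK]]] := lat_diag_of_projections Ku
  (stable_e true false false ltac:(rewrite !mul0r; apply: vring0))
  (stable_e false false true ltac:(rewrite !mul0r; apply: vring0)).
have : End_mx (mx22 a 0 0 b) (mx22 0 1 0 0).
  rewrite -(End_mx_lat_eq _ Ku _ eqK) ?unitmx22 ?mulr0 ?mulf_neq0 // -End_lat_mx //.
  by apply: (stable_e false true false); rewrite mul1r.
case/End_mx_diag=> // _; rewrite mul1r => oba _ _.
exists a, (b / a); split; rewrite ?mulf_neq0 ?invr_eq0 // => x.
have -> : a *: P *m mx22 1 0 0 (b / a) = P *m mx22 a 0 0 b.
  by rewrite -scalemxAl scalemxAr scalemx22 mulr1 !mulr0 mulrC divfK.
by rewrite eqR; apply: lat_mull.
Qed.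

Lemma pair_order_sub_End_unit (P : 'M[F]_2) a b t u :
  P \in unitmx -> a != 0 -> b != 0 -> t != 0 -> u != 0 -> o (u / t) ->
  (forall s, End_mx (a *: P *m mx22 1 0 0 t) s -> End_mx (b *: P *m mx22 1 0 0 u) s ->
     End_mx P s) ->
  o t^-1.
Proof.
move=> Pu a0 b0 t0 u0 out sub; pose s := P *m mx22 0 t^-1 0 0 *m invmx P.
have End_s c w : c != 0 -> w != 0 -> End_mx (c *: P *m mx22 1 0 0 w) s <-> o (t^-1 * w).
  move=> c0 w0; have Wu : mx22 1 0 0 w \in unitmx by rewrite unitmx22 mul1r mulr0.
  rewrite -scalemxAl End_mxZ ?unitmx_mul ?Pu // End_mx_conj // End_mx_diag ?oner_neq0 //.
  rewrite divr1 !mul0r; split=> [[]|ot] //; split=> //; apply: vring0.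
have /(End_mx_conj _ Pu (unitmx1 _ _)) : End_mx (P *m 1%:M) s.
  rewrite mulmx1; apply: sub; apply/End_s => //; first by rewrite mulVf //; apply: vring1.
  by rewrite mulrC.
by rewrite End_mx1 => /intmx22 [].
Qed.

Lemma lat_diag_unit_scale (P : 'M[F]_2) c w :
  P \in unitmx -> c != 0 -> w != 0 -> o w -> o w^-1 ->
  forall x, lat (c *: P *m mx22 1 0 0 w) x <-> scale_lat c (lat P) x.
Proof.
move=> Pu c0 w0 ow ow' x; rewrite scale_lat_mx lat_GLo ?unitmxZ ?unitfE //.
apply: (@GLo_inverse _ _ (mx22 1 0 0 w^-1)).
- by rewrite mulmx22 mx22_1; congr mx22; field.
- by apply/intmx22; split; [apply: vring1 | apply: vring0 | apply: vring0 |].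
- by apply/intmx22; split; [apply: vring1 | apply: vring0 | apply: vring0 |].
Qed.

Lemma same_pair_order_homothetic (P1 Q1 P2 Q2 : 'M[F]_2) :
  P1 \in unitmx -> Q1 \in unitmx -> P2 \in unitmx -> Q2 \in unitmx ->
  (forall s, End_mx P1 s /\ End_mx Q1 s <-> End_mx P2 s /\ End_mx Q2 s) ->
  exists2 l, l != 0 & (forall x, lat P2 x <-> scale_lat l (lat P1) x) \/
                      (forall x, lat Q2 x <-> scale_lat l (lat P1) x).
Proof.
move=> P1u Q1u P2u Q2u same_order.
have [P [d1 [d2 [Pu d12 od eqP1 eqQ1]]]] := lat_pair_adapted_basis P1u Q1u.
have PDu : P *m mx22 d1 0 0 d2 \in unitmx by rewrite unitmx_mul Pu unitmx22 !mulr0.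
have order_P s : End_mx P s -> End_mx (P *m mx22 d1 0 0 d2) s -> End_mx P2 s /\ End_mx Q2 s.
  rewrite -(End_mx_lat_eq _ P1u Pu eqP1) -(End_mx_lat_eq _ Q1u PDu eqQ1) => EP1 EQ1.
  exact/same_order.
have [a [t [a0 t0 ot eqP2]]] :=
  lat_stable_under_pair_order Pu P2u d12 od (fun s EP EPD => (order_P s EP EPD).1).
have [b [u [b0 u0 ou eqQ2]]] :=
  lat_stable_under_pair_order Pu Q2u d12 od (fun s EP EPD => (order_P s EP EPD).2).
have diag_unit c w : c != 0 -> w != 0 -> c *: P *m mx22 1 0 0 w \in unitmx.
  by move=> c0 w0; rewrite unitmx_mul unitmxZ ?unitfE // Pu unitmx22 mul1r mulr0.
have sub s : End_mx (a *: P *m mx22 1 0 0 t) s -> End_mx (b *: P *m mx22 1 0 0 u) s ->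
    End_mx P s.
  rewrite -(End_mx_lat_eq _ P2u (diag_unit _ _ a0 t0) eqP2).
  rewrite -(End_mx_lat_eq _ Q2u (diag_unit _ _ b0 u0) eqQ2) => EP2 EQ2.
  by have [] := (same_order s).2 (conj EP2 EQ2); rewrite (End_mx_lat_eq _ P1u Pu eqP1).
have eqP1' c x : scale_lat c (lat P) x <-> scale_lat c (lat P1) x.
  by apply: scale_lat_ext => y; rewrite eqP1.
have [out|otu] := vring_divC t0 u0.
  have ot' := pair_order_sub_End_unit Pu a0 b0 t0 u0 out sub.
  by exists a => //; left => x; rewrite eqP2 lat_diag_unit_scale ?eqP1'.
have ou' := pair_order_sub_End_unit Pu b0 a0 u0 t0 otu (fun s EQ EP => sub s EP EQ).
by exists b => //; right => x; rewrite eqQ2 lat_diag_unit_scale ?eqP1'.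
Qed.

Section Duality.
Variable B : 'M[F]_2.
Hypotheses (B_sym : B^T = B) (B_unit : B \in unitmx).

Lemma bformZl (x y : 'cV[F]_2) l : bform B (l *: x) y = l * bform B x y.
Proof. by rewrite /bform linearZ -!scalemxAl mxE. Qed.

Lemma bformZr (x y : 'cV[F]_2) l : bform B x (l *: y) = l * bform B x y.
Proof. by rewrite /bform -scalemxAr mxE. Qed.

Lemma dual_lattice_ext (L L' : 'cV[F]_2 -> Prop) : (forall x, L x <-> L' x) ->
  forall x, dual_lattice v B L x <-> dual_lattice v B L' x.
Proof. by move=> eqL x; split=> Lx y /eqL; apply: Lx. Qed.

Lemma dual_lattice_scale l (L : 'cV[F]_2 -> Prop) : l != 0 ->
  forall x, dual_lattice v B (scale_lat l L) x <-> scale_lat l^-1 (dual_lattice v B L) x.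
Proof.
move=> l0 x; split=> [dual_x|[z dual_z ->] y [w Lw ->]]; last first.
  by rewrite bformZr bformZl mulrA mulfV // mul1r; apply: dual_z.
exists (l *: x); last by rewrite scalerA mulVf ?scale1r.
by move=> y Ly; rewrite bformZl -bformZr; apply: dual_x; exists y.
Qed.

Lemma order_of_ext (L L' : 'cV[F]_2 -> Prop) : (forall x, L x <-> L' x) ->
  forall s, order_of v B L s <-> order_of v B L' s.
Proof.
by move=> eqL s; rewrite /order_of (End_lat_ext eqL) (End_lat_ext (dual_lattice_ext eqL)).
Qed.

Definition dualmx (P : 'M[F]_2) := invmx (P^T *m B).

Lemma dualmx_unit P : P \in unitmx -> dualmx P \in unitmx.
Proof. by move=> Pu; rewrite unitmx_inv unitmx_mul unitmx_tr Pu. Qed.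

Lemma dualmxK P : P \in unitmx -> dualmx (dualmx P) = P.
Proof.
move=> Pu; have BPu : B *m P \in unitmx by rewrite unitmx_mul B_unit Pu.
rewrite /dualmx trmx_inv trmx_mul B_sym trmxK.
by rewrite invmxM ?unitmx_inv // invmxK mulmxA mulVmx // mul1mx.
Qed.

(* The pairing of [x] with the basis [P] is the column [P^T B x]. *)
Lemma dual_lattice_mx P x : P \in unitmx ->
  dual_lattice v B (lat P) x <-> lat (dualmx P) x.
Proof.
move=> Pu; rewrite lat_unitE ?dualmx_unit // /dualmx invmxK.
have -> : P^T *m B *m x = (x^T *m B *m P)^T by rewrite !trmx_mul trmxK B_sym mulmxA.
split=> [dual_x i j|int_xBP y [a int_a ->]]; last first.
  by rewrite /bform !mulmxA; apply: intmxM => //; rewrite -[_ *m P]trmxK; apply: intmx_tr.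
have /dual_x : lat P (P *m delta_mx i 0) by exists (delta_mx i 0); [apply: intmx_delta|].
by rewrite mxE (ord1 j) /bform mulmxA -colE mxE.
Qed.

Lemma order_of_mx (P : 'M[F]_2) (L : 'cV[F]_2 -> Prop) s : P \in unitmx ->
  (forall x, L x <-> lat P x) ->
  order_of v B L s <-> End_mx P s /\ End_mx (dualmx P) s.
Proof.
move=> Pu eqL; rewrite (order_of_ext eqL) /order_of.
by rewrite (End_lat_ext (fun x => dual_lattice_mx x Pu)) !End_lat_mx ?dualmx_unit.
Qed.

Lemma order_of_scale l (L : 'cV[F]_2 -> Prop) s : l != 0 ->
  order_of v B (scale_lat l L) s <-> order_of v B L s.
Proof.
move=> l0; rewrite /order_of (End_lat_ext (@dual_lattice_scale l L l0)).
by rewrite !End_lat_scale ?invr_eq0.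
Qed.

Lemma order_of_dual (P : 'M[F]_2) s : P \in unitmx ->
  order_of v B (dual_lattice v B (lat P)) s <-> order_of v B (lat P) s.
Proof.
move=> Pu; rewrite !(order_of_mx s Pu (fun x => iff_refl _)) (order_of_mx s (dualmx_unit Pu)).
  by rewrite dualmxK //; split=> -[].
by move=> x; apply: dual_lattice_mx.
Qed.


Theorem same_order_iff_homothetic (L1 L2 : 'cV[F]_2 -> Prop) :
  is_lattice v L1 -> is_lattice v L2 ->
  (forall s, order_of v B L1 s <-> order_of v B L2 s) <->
  exists l : F, l != 0 /\
    ((forall x, L1 x <-> scale_lat l L2 x) \/
     (forall x, L1 x <-> scale_lat l (dual_lattice v B L2) x)).
Proof.
move=> /lattice_basis [P1 P1u eqL1] /lattice_basis [P2 P2u eqL2].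
have eqL2' x : dual_lattice v B L2 x <-> lat (dualmx P2) x.
  by rewrite (dual_lattice_ext eqL2) dual_lattice_mx.
split=> [same_order|[l [l0 [eqL|eqL]]] s]; last first.
- rewrite (order_of_ext eqL) order_of_scale // (order_of_ext (dual_lattice_ext eqL2)).
  by rewrite order_of_dual // (order_of_ext eqL2).
- by rewrite (order_of_ext eqL) order_of_scale.
have [l l0 homothetic] : exists2 l, l != 0 &
    (forall x, lat P2 x <-> scale_lat l (lat P1) x) \/
    (forall x, lat (dualmx P2) x <-> scale_lat l (lat P1) x).
  apply: (@same_pair_order_homothetic P1 (dualmx P1)); rewrite ?dualmx_unit // => s.
  by rewrite -(order_of_mx s P1u eqL1) -(order_of_mx s P2u eqL2).
have eqL1_scaled (L : 'cV[F]_2 -> Prop) Q : (forall x, L x <-> lat Q x) ->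
    (forall x, lat Q x <-> scale_lat l (lat P1) x) -> forall x, L1 x <-> scale_lat l^-1 L x.
  move=> eqL eqQ; apply: scale_latV => // x; rewrite eqL eqQ.
  by apply: scale_lat_ext => y; rewrite eqL1.
exists l^-1; split; first by rewrite invr_eq0.
case: homothetic => eqQ; [left | right].
  exact: eqL1_scaled eqL2 eqQ.
exact: eqL1_scaled eqL2' eqQ.
Qed.

End Duality.

End Valuation.

Theorem corollary8p3 (F : fieldType) (v : F -> int)
    (hF : is_nonarch_local_field v) (hchar : (2%:R : F) != 0)
    (dag : 'M[F]_2 -> 'M[F]_2) (B : 'M[F]_2)
    (hdag : orth_involution_with_form dag B)
    (L1 L2 : 'cV[F]_2 -> Prop) (h1 : is_lattice v L1) (h2 : is_lattice v L2) :
  (forall s, order_of v B L1 s <-> order_of v B L2 s) <->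
  exists l : F, l != 0 /\
    ((forall x, L1 x <-> scale_lat l L2 x) \/
     (forall x, L1 x <-> scale_lat l (dual_lattice v B L2) x)).
Proof.
case: hdag => _ _ _ [B_sym B_unit] _.
exact: (same_order_iff_homothetic (lf_mul hF) (lf_add hF) B_sym B_unit h1 h2).
Qed.
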